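(* With the notation of the context, for all $f\neq f'$ in $[n]$, all $0\le r<d$, all $\lambda\ge0$, and every fixed choice of $(\sigma_1,b_1),\dots,(\sigma_r,b_r)$, \[h_r(f,f';\sigma_1,b_1,\dots,\sigma_r,b_r)\ge\mathbb{E}_{\sigma_{r+1},b_{r+1}}\,h_{r+1}(f,f';\sigma_1,b_1,\dots,\sigma_r,b_r,\sigma_{r+1},b_{r+1}),\] where $\sigma_{r+1}$ is uniform among odd integers in $[n]$ and $b_{r+1}$ is independently uniform in $[n]$.
   Context: $n,B$ are powers of $2$ with $2\le B\le n$, $F\ge2$ even, $\epsilon=(1/4)^{F-1}$, and $\hat G$ is a flat filter with $B$ buckets and sharpness $F$: a sequence in $\mathbb{R}^n$ indexed by $\mathbb{Z}_n$ (representatives in $\{-n/2,\dots,n/2-1\}$), symmetric about $0$, with $\hat G_f\in[0,1]$ for all $f$, $\hat G_f\ge1-\epsilon$ for $|f|\le n/(2B)$, and $\hat G_f\le\epsilon\,(n/(B|f|))^{F-1}$ for $|f|\ge n/B$. $M(\lambda)=e^{\lambda\epsilon}[(2/B+1/n)(e^{\lambda(1-\epsilon)}-1)+1]$. For $\sigma,b\in[n]$: $\pi_{\sigma,b}(f)=\sigma(f-b)\bmod n$, $h_{\sigma,b}(f)=\lfloor(B/n)\pi_{\sigma,b}(f)+1/2\rfloor$, $o_{f,\sigma,b}(f')=\pi_{\sigma,b}(f')-(n/B)h_{\sigma,b}(f)\bmod n$; $o_{f,\ell}$ abbreviates $o_{f,\sigma_\ell,b_\ell}$. For $d\ge1$,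 $\beta>0$: $h_r(f,f';\sigma_1,b_1,\dots,\sigma_r,b_r)=e^{-\lambda\beta}\exp(\lambda\sum_{\ell=1}^r\hat G_{o_{f,\ell}(f')})M(\lambda)^{d-r}$. *)

From Stdlib Require Import Reals Lra Lia ZArith List.
Open Scope R_scope.

Definition Rsum_nat (m : nat) (g : nat -> R) : R :=
  fold_right Rplus 0 (map g (seq 0 m)).

(* representative of x mod n in {-n/2, ..., n/2 - 1} *)
Definition zrep (n : Z) (x : Z) : Z :=
  ((x + n / 2) mod n - n / 2)%Z.

(* a filter indexed by Z_n: G is read at the representative *)
Definition Gat (n : Z) (G : Z -> R) (x : Z) : R := G (zrep n x).

Definition eps (F : nat) : R := (/ 4) ^ (F - 1).

Definition flat_filter (n B F : nat) (G : Z -> R) : Prop :=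
  (forall x : Z, Gat (Z.of_nat n) G (- x) = Gat (Z.of_nat n) G x) /\
  (forall f : Z, (- (Z.of_nat n / 2) <= f < Z.of_nat n / 2)%Z ->
     0 <= G f <= 1 /\
     (IZR (Z.abs f) <= INR n / (2 * INR B) -> G f >= 1 - eps F) /\
     (IZR (Z.abs f) >= INR n / INR B ->
        G f <= eps F * (INR n / (INR B * IZR (Z.abs f))) ^ (F - 1))).

Definition Mfun (n B F : nat) (lam : R) : R :=
  exp (lam * eps F) *
  ((2 / INR B + 1 / INR n) * (exp (lam * (1 - eps F)) - 1) + 1).

Definition piZ (n sigma b f : Z) : Z := (sigma * (f - b)) mod n.

(* h_{sigma,b}(f) = floor((B/n) pi + 1/2) = floor((2 B pi + n) / (2 n)) *)
Definition hZ (n B sigma b f : Z) : Z :=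
  ((2 * B * piZ n sigma b f + n) / (2 * n))%Z.

Definition oZ (n B f sigma b f' : Z) : Z :=
  (piZ n sigma b f' - (n / B) * hZ n B sigma b f) mod n.

(* h_r(f, f'; (sigma_1,b_1),...,(sigma_r,b_r)), r = length sb *)
Definition hr (n B F d : nat) (G : Z -> R) (lam beta : R) (f f' : Z)
    (sb : list (Z * Z)) : R :=
  exp (- lam * beta) *
  exp (lam * fold_right Rplus 0
         (map (fun p => Gat (Z.of_nat n) G
                 (oZ (Z.of_nat n) (Z.of_nat B) f (fst p) (snd p) f')) sb)) *
  Mfun n B F lam ^ (d - length sb).

From Stdlib Require Import Reals ZArith List.
From Stdlib Require Import Lra Lia Znumtheory.
Open Scope R_scope.

(* Writing [h_r = C M(lambda)] and [h_(r+1) = C exp (lambda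
   G(o(f')))] for a common factor [C >= 0] (lemma [hr_extend]), it suffices to
   bound the average of [exp (lambda G(o(f')))] over odd [sigma] and shifts [b]
   by [M(lambda)] ([average_exp_filter_le]).  This combines two facts:
   - pointwise, [exp (lambda G) <= e^(lambda eps) (1 + (e^(lambda (1-eps)) - 1)
     1_hit)], where a "hit" means [f'] lands within one bucket width [m = n/B]
     of the centre of [f]'s bucket ([exp_flat_filter_le]);
   - there are at most [n m] hits among the [n^2/2] pairs [(sigma, b)]
     ([hit_count]).  Writing [f' - f = 2^j u] with [u] odd, no hit is possible
     when [2^j >= 2m] ([no_hit_far]); otherwise a hit is determined by
     [pi(f)], the offset of [f'] at resolution [2^(j+1)] and [sigma / 2^kQ]
     with [n = 2^j 2^kQ], which encode it injectively into [[0, n m)]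
     ([hit_code_injective]).
   The file develops finite sums and counting by injection, 2-adic arithmetic,
   the bucket geometry, the hit count, the filter bounds, and finally the
   theorem. *)

Definition lsum {A : Type} (l : list A) (g : A -> R) : R :=
  fold_right Rplus 0 (map g l).

Lemma Rsum_nat_lsum (m : nat) (g : nat -> R) : Rsum_nat m g = lsum (seq 0 m) g.
Proof. reflexivity. Qed.

Lemma lsum_le {A : Type} (l : list A) (g1 g2 : A -> R) :
  (forall x, In x l -> g1 x <= g2 x) -> lsum l g1 <= lsum l g2.
Proof.
  unfold lsum; induction l as [|a l IH]; intros H; simpl; [lra|].
  apply Rplus_le_compat; [apply H; left | apply IH; intros; apply H; right]; auto.
Qed.

Lemma lsum_ext {A : Type} (l : list A) (g1 g2 : A -> R) :
  (forall x, In x l -> g1 x = g2 x) -> lsum l g1 = lsum l g2.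
Proof.
  intros H; apply Rle_antisym; apply lsum_le; intros x Hx; rewrite H; auto; lra.
Qed.

Lemma lsum_scal {A : Type} (l : list A) (g : A -> R) (c : R) :
  lsum l (fun x => c * g x) = c * lsum l g.
Proof. unfold lsum; induction l as [|a l IH]; simpl; [|rewrite IH]; ring. Qed.

Lemma lsum_const_plus {A : Type} (l : list A) (g : A -> R) (c : R) :
  lsum l (fun x => c + g x) = c * INR (length l) + lsum l g.
Proof.
  unfold lsum; induction l as [|a l IH]; simpl; [ring|].
  rewrite IH; destruct (length l); simpl; ring.
Qed.

Lemma lsum_indicator_pairs {A B : Type} (l1 : list A) (l2 : list B)
    (P : A -> B -> bool) :
  lsum l1 (fun s => lsum l2 (fun b => if P s b then 1 else 0)) =
  INR (length (filter (fun x => P (fst x) (snd x)) (list_prod l1 l2))).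
Proof.
  unfold lsum; induction l1 as [|a l1 IH]; simpl; [reflexivity|].
  rewrite IH, filter_app, length_app, plus_INR, filter_map_swap; f_equal.
  rewrite length_map. clear IH.
  induction l2 as [|c l2 IH2]; simpl; [reflexivity|].
  simpl in IH2 |- *; rewrite IH2; destruct (P a c);
    [change (length (c :: ?l)) with (S (length l)); rewrite S_INR|]; ring.
Qed.

Lemma NoDup_list_prod {A B : Type} (l1 : list A) (l2 : list B) :
  NoDup l1 -> NoDup l2 -> NoDup (list_prod l1 l2).
Proof.
  induction 1 as [|a l1 Ha Hl1 IH]; intros H2; simpl; [constructor|].
  apply NoDup_app; auto.
  - apply NoDup_map_NoDup_ForallPairs; auto.
    intros x y _ _ E; injection E; auto.
  - intros [x y] Hx Hy. apply in_map_iff in Hx as [z [Hz _]].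
    injection Hz as <- _. apply in_prod_iff in Hy; tauto.
Qed.

Lemma count_by_injection (S T L : nat) (P : nat -> nat -> bool)
    (Phi : nat -> nat -> nat) :
  (forall s b, (s < S)%nat -> (b < T)%nat -> P s b = true -> (Phi s b < L)%nat) ->
  (forall s1 b1 s2 b2, (s1 < S)%nat -> (b1 < T)%nat -> (s2 < S)%nat -> (b2 < T)%nat ->
     P s1 b1 = true -> P s2 b2 = true -> Phi s1 b1 = Phi s2 b2 -> s1 = s2 /\ b1 = b2) ->
  Rsum_nat S (fun s => Rsum_nat T (fun b => if P s b then 1 else 0)) <= INR L.
Proof.
  intros Hrange Hinj.
  rewrite Rsum_nat_lsum; erewrite lsum_ext by (intros; apply Rsum_nat_lsum).
  rewrite lsum_indicator_pairs; apply le_INR.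
  set (hits := filter _ _).
  assert (Hhit : forall x, In x hits ->
            (fst x < S)%nat /\ (snd x < T)%nat /\ P (fst x) (snd x) = true).
  { intros [s b] Hx; apply filter_In in Hx as [Hx HP].
    apply in_prod_iff in Hx as [Hs Hb]; apply in_seq in Hs, Hb; simpl in *.
    repeat split; auto; lia. }
  rewrite <- (length_map (fun x => Phi (fst x) (snd x)) hits), <- (length_seq L 0).
  apply NoDup_incl_length.
  - apply NoDup_map_NoDup_ForallPairs.
    + intros [s1 b1] [s2 b2] H1 H2 E.
      apply Hhit in H1, H2; simpl in *.
      destruct (Hinj s1 b1 s2 b2) as [-> ->]; try reflexivity; tauto.
    + apply NoDup_filter, NoDup_list_prod; apply seq_NoDup.
  - intros c Hc; apply in_map_iff in Hc as [[s b] [<- Hx]].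
    apply Hhit in Hx; simpl in *; apply in_seq.
    split; [lia | apply Hrange; intuition].
Qed.

Local Open Scope Z_scope.

Lemma pow2_dvd_cancel_odd (a x u : Z) :
  0 <= a -> Z.odd u = true -> (2 ^ a | x * u) -> (2 ^ a | x).
Proof.
  intros Ha Hu Hd. apply Gauss with u; [rewrite Z.mul_comm; exact Hd|].
  apply rel_prime_sym, Zpow_facts.rel_prime_Zpower_r; auto.
  apply rel_prime_sym, prime_rel_prime; [apply prime_2|].
  intros [c ->]. rewrite Z.odd_mul, Bool.andb_false_r in Hu; discriminate.
Qed.

Lemma two_adic_decomposition (x : Z) :
  x <> 0 -> exists j u, 0 <= j /\ x = 2 ^ j * u /\ Z.odd u = true.
Proof.
  induction x as [x IH] using Z_lt_abs_induction; intros Hx.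
  destruct (Z.odd x) eqn:Ho.
  - exists 0, x; rewrite Z.pow_0_r; repeat split; auto; lia.
  - assert (Hx2 : x = 2 * (x / 2)).
    { rewrite (Z.div_mod x 2) at 1 by lia. rewrite Zmod_odd, Ho; lia. }
    destruct (IH (x / 2)) as [j [u [Hj [Hxu Hu]]]]; [lia|lia|].
    exists (j + 1), u; rewrite Z.pow_add_r by lia; repeat split; auto; lia.
Qed.

Lemma dvd_small_eq (K x y : Z) :
  0 <= x < K -> 0 <= y < K -> (K | x - y) -> x = y.
Proof.
  intros Hx Hy [e He].
  destruct (Z.lt_trichotomy e 0) as [Hlt|[->|Hgt]]; nia.
Qed.

Lemma div_eq_dvd_eq (K x y : Z) :
  0 < K -> x / K = y / K -> (K | x - y) -> x = y.
Proof.
  intros HK Hq Hd.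
  pose proof (Z.div_mod x K) as Ex; pose proof (Z.div_mod y K) as Ey.
  assert (x mod K = y mod K); [|lia].
  apply (dvd_small_eq K); try (apply Z.mod_pos_bound; lia).
  replace (x mod K - y mod K) with (x - y) by lia; exact Hd.
Qed.

Lemma piZ_injective_shift (k s b1 b2 f : Z) :
  0 <= k -> Z.odd s = true ->
  0 <= b1 < 2 ^ k -> 0 <= b2 < 2 ^ k ->
  piZ (2 ^ k) s b1 f = piZ (2 ^ k) s b2 f -> b1 = b2.
Proof.
  intros Hk Hs Hb1 Hb2 E. apply (dvd_small_eq (2 ^ k)); auto.
  apply pow2_dvd_cancel_odd with s; auto.
  unfold piZ in E; rewrite !Z.mod_eq in E by lia.
  exists (s * (f - b2) / 2 ^ k - s * (f - b1) / 2 ^ k); lia.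
Qed.

Section Buckets.

(* [N] frequencies hashed into [Bz] buckets of width [M]. *)
Variables N Bz M : Z.
Hypotheses (HN : 0 < N) (HBz : 0 < Bz) (HBM : Bz * M = N).

Lemma offset_decomposition (s b f f' : Z) :
  exists c, zrep N (oZ N Bz f s b f') =
    (piZ N s b f - M * hZ N Bz s b f) + s * (f' - f) + N * c.
Proof.
  assert (HNB : N / Bz = M) by (rewrite <- HBM, Z.mul_comm, Z.div_mul; lia).
  unfold zrep, oZ; rewrite HNB; unfold piZ at 1 2.
  rewrite !Z.mod_eq by lia.
  set (h := hZ N Bz s b f).
  set (a := s * (f' - b) / N); set (c0 := s * (f - b) / N).
  set (x := (s * (f' - b) - N * a - M * h) / N).
  set (y := (s * (f' - b) - N * a - M * h - N * x + N / 2) / N).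
  exists (c0 - a - x - y); ring.
Qed.

(* [f] itself lies within half a bucket of its bucket's centre. *)
Lemma center_offset_bound (s b f : Z) :
  - M <= 2 * (piZ N s b f - M * hZ N Bz s b f) < M.
Proof.
  unfold hZ; set (p := piZ N s b f).
  pose proof (Z.div_mod (2 * Bz * p + N) (2 * N)) as E.
  pose proof (Z.mod_pos_bound (2 * Bz * p + N) (2 * N)) as Hr.
  set (h := (2 * Bz * p + N) / (2 * N)) in *.
  set (r := (2 * Bz * p + N) mod (2 * N)) in *.
  subst N; nia.
Qed.

(* From now on [f' - f = 2^j u] with [u] odd, and [N = 2^j 2^kQ] with
   [kQ >= 1], i.e. [2^j] is the exact power of two dividing the gap. *)
Variables j kQ u f f' : Z.
Hypotheses (Hj : 0 <= j) (HkQ : 1 <= kQ) (HNjQ : N = 2 ^ j * 2 ^ kQ)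
  (Hgap : f' - f = 2 ^ j * u) (Hu : Z.odd u = true).

Let HQ : 2 ^ kQ = 2 * 2 ^ (kQ - 1).
Proof. rewrite <- Z.pow_succ_r by lia; f_equal; lia. Qed.

Lemma offset_odd_multiple (s b : Z) :
  Z.odd s = true ->
  exists w, Z.odd w = true /\
    zrep N (oZ N Bz f s b f') = (piZ N s b f - M * hZ N Bz s b f) + 2 ^ j * w.
Proof.
  intros Hs. destruct (offset_decomposition s b f f') as [c ->].
  exists (s * u + 2 * (2 ^ (kQ - 1) * c)); split.
  - rewrite Z.odd_add_mul_2, Z.odd_mul, Hs, Hu; auto.
  - rewrite Hgap, HNjQ, HQ; ring.
Qed.

Lemma no_hit_far (s b : Z) :
  2 * M <= 2 ^ j -> Z.odd s = true ->
  M <= Z.abs (zrep N (oZ N Bz f s b f')).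
Proof.
  intros HMP Hs. destruct (offset_odd_multiple s b Hs) as [w [Hw ->]].
  pose proof (center_offset_bound s b f).
  assert (w <> 0) by (intros ->; discriminate).
  destruct (Z.lt_trichotomy w 0) as [Hlt|[Heq|Hgt]]; [nia|lia|nia].
Qed.

(* For odd [s] hitting the window [|offset| < M] (possible only when
   [2^j <= M]), the hit is encoded by the pair of "digits"
   [pi(f)] (in base [M]) and [hit_low], which records the offset at
   resolution [2^(j+1)] together with [s / 2^kQ]. *)
Definition hit_low (s b : Z) : Z :=
  (zrep N (oZ N Bz f s b f') + M) / (2 * 2 ^ j) * 2 ^ j + s / 2 ^ kQ.

Definition hit_code (s b : Z) : Z := piZ N s b f * M + hit_low s b.

Hypothesis HPM : (2 ^ j | M).

Lemma hit_low_bound (s b : Z) :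
  0 <= s < N -> Z.abs (zrep N (oZ N Bz f s b f')) < M -> 0 <= hit_low s b < M.
Proof.
  intros Hs Hz; apply Z.abs_lt in Hz; unfold hit_low.
  destruct HPM as [q Hq].
  assert (0 <= (zrep N (oZ N Bz f s b f') + M) / (2 * 2 ^ j) < q).
  { split; [apply Z.div_pos | apply Z.div_lt_upper_bound]; nia. }
  assert (0 <= s / 2 ^ kQ < 2 ^ j).
  { split; [apply Z.div_pos | apply Z.div_lt_upper_bound]; nia. }
  nia.
Qed.

Lemma hit_code_bound (s b : Z) :
  0 <= s < N -> Z.abs (zrep N (oZ N Bz f s b f')) < M -> 0 <= hit_code s b < N * M.
Proof.
  intros Hs Hz. pose proof (hit_low_bound s b Hs Hz).
  assert (0 <= piZ N s b f < N) by (apply Z.mod_pos_bound; lia).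
  unfold hit_code; nia.
Qed.

Lemma hit_code_digits (s1 b1 s2 b2 : Z) :
  0 <= s1 < N -> 0 <= s2 < N ->
  Z.abs (zrep N (oZ N Bz f s1 b1 f')) < M ->
  Z.abs (zrep N (oZ N Bz f s2 b2 f')) < M ->
  hit_code s1 b1 = hit_code s2 b2 ->
  piZ N s1 b1 f = piZ N s2 b2 f /\
  (zrep N (oZ N Bz f s1 b1 f') + M) / (2 * 2 ^ j) =
  (zrep N (oZ N Bz f s2 b2 f') + M) / (2 * 2 ^ j) /\
  s1 / 2 ^ kQ = s2 / 2 ^ kQ.
Proof.
  intros Hs1 Hs2 Hz1 Hz2 E.
  pose proof (hit_low_bound s1 b1 Hs1 Hz1); pose proof (hit_low_bound s2 b2 Hs2 Hz2).
  unfold hit_code in E.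
  destruct (Z.div_mod_unique M (piZ N s1 b1 f) (piZ N s2 b2 f)
              (hit_low s1 b1) (hit_low s2 b2)) as [Epi Elow]; [lia|lia|lia|].
  unfold hit_low in Elow.
  assert (forall s, 0 <= s < N -> 0 <= s / 2 ^ kQ < 2 ^ j).
  { intros s Hs; split; [apply Z.div_pos | apply Z.div_lt_upper_bound]; nia. }
  destruct (Z.div_mod_unique (2 ^ j)
              ((zrep N (oZ N Bz f s1 b1 f') + M) / (2 * 2 ^ j))
              ((zrep N (oZ N Bz f s2 b2 f') + M) / (2 * 2 ^ j))
              (s1 / 2 ^ kQ) (s2 / 2 ^ kQ)) as [Eq Er]; [auto|auto|lia|].
  repeat split; auto.
Qed.

Lemma hit_code_injective (s1 b1 s2 b2 : Z) :
  Z.odd s1 = true -> Z.odd s2 = true -> 0 <= s1 < N -> 0 <= s2 < N ->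
  0 <= b1 < N -> 0 <= b2 < N ->
  Z.abs (zrep N (oZ N Bz f s1 b1 f')) < M ->
  Z.abs (zrep N (oZ N Bz f s2 b2 f')) < M ->
  hit_code s1 b1 = hit_code s2 b2 -> s1 = s2 /\ b1 = b2.
Proof.
  intros Hs1 Hs2 Hs1N Hs2N Hb1 Hb2 Hz1 Hz2 E.
  destruct (hit_code_digits s1 b1 s2 b2) as [Epi [Ez Es]]; auto.
  assert (Eh : hZ N Bz s1 b1 f = hZ N Bz s2 b2 f) by (unfold hZ; rewrite Epi; auto).
  destruct (offset_decomposition s1 b1 f f') as [c1 Hc1].
  destruct (offset_decomposition s2 b2 f f') as [c2 Hc2].
  set (z1 := zrep N (oZ N Bz f s1 b1 f')) in *.
  set (z2 := zrep N (oZ N Bz f s2 b2 f')) in *.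
  rewrite Epi, Eh in Hc1. rewrite Hgap, HNjQ in Hc1, Hc2.
  (* Both offsets are congruent modulo [2^(j+1)], hence equal. *)
  assert (Hz : z1 = z2).
  { destruct (proj1 (Z.odd_spec _) Hs1) as [t1 Ht1].
    destruct (proj1 (Z.odd_spec _) Hs2) as [t2 Ht2].
    cut (z1 + M = z2 + M); [lia|].
    apply (div_eq_dvd_eq (2 * 2 ^ j)); [lia|auto|].
    exists ((t1 - t2) * u + 2 ^ (kQ - 1) * (c1 - c2)).
    rewrite Hc1, Hc2, Ht1, Ht2, HQ; ring. }
  (* Then [2^kQ] divides [(s1 - s2) u], hence [s1 - s2]. *)
  assert (Hs : s1 = s2).
  { apply (div_eq_dvd_eq (2 ^ kQ)); [lia|auto|].
    apply pow2_dvd_cancel_odd with u; [lia|auto|].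
    exists (c2 - c1); apply Z.mul_reg_l with (2 ^ j); [lia|].
    rewrite Hc1, Hc2 in Hz; lia. }
  subst s2; split; auto.
  rewrite HNjQ, <- Z.pow_add_r in Hb1, Hb2, Epi by lia.
  apply (piZ_injective_shift (j + kQ) s1 b1 b2 f); auto; lia.
Qed.

End Buckets.

Local Close Scope Z_scope.

(* The [(s, b)] event "[f'] lands within one bucket width [m] of the centre
   of [f]'s bucket" under the hash with [sigma = 2 s + 1] and shift [b]. *)
Definition hit (n B m : nat) (f f' : Z) (s b : nat) : bool :=
  (Z.abs (zrep (Z.of_nat n) (oZ (Z.of_nat n) (Z.of_nat B) f
     (Z.of_nat (2 * s + 1)) (Z.of_nat b) f')) <? Z.of_nat m)%Z.

Lemma pow2_exponent_lt (j k u : Z) :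
  (0 <= j -> Z.odd u = true -> Z.abs (2 ^ j * u) < 2 ^ k -> j < k)%Z.
Proof.
  intros Hj Hu Hlt. destruct (Z.lt_ge_cases j k) as [|Hge]; auto.
  assert (u <> 0)%Z by (intros ->; discriminate).
  assert (2 ^ k <= 2 ^ j)%Z by (apply Z.pow_le_mono_r; lia).
  assert (0 < 2 ^ j)%Z by (apply Z.pow_pos_nonneg; lia).
  rewrite Z.abs_mul, (Z.abs_eq (2 ^ j)) in Hlt by lia. nia.
Qed.

Lemma odd_sigma (s : nat) : Z.odd (Z.of_nat (2 * s + 1)) = true.
Proof.
  replace (Z.of_nat (2 * s + 1)) with (1 + 2 * Z.of_nat s)%Z by lia.
  apply Z.odd_add_mul_2.
Qed.

Section HitCount.

Variables (n B m : nat) (j kQ u f f' : Z).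
Hypotheses (HN : (0 < Z.of_nat n)%Z) (HBz : (0 < Z.of_nat B)%Z)
  (HBM : (Z.of_nat B * Z.of_nat m = Z.of_nat n)%Z)
  (Hj : (0 <= j)%Z) (HkQ : (1 <= kQ)%Z)
  (HNjQ : Z.of_nat n = (2 ^ j * 2 ^ kQ)%Z)
  (Hgap : (f' - f = 2 ^ j * u)%Z) (Hu : Z.odd u = true).

Let Hsigma_range (s : nat) :
  (s < n / 2)%nat -> (0 <= Z.of_nat (2 * s + 1) < Z.of_nat n)%Z.
Proof.
  intros Hs; apply Nat2Z.inj_lt in Hs; rewrite Nat2Z.inj_div in Hs.
  assert (Heven : (Z.of_nat n mod 2 = 0)%Z).
  { rewrite HNjQ, Z.mul_comm, <- (Z.succ_pred kQ), Z.pow_succ_r by lia.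
    rewrite <- Z.mul_assoc, Z.mul_comm, Z.mod_mul; lia. }
  pose proof (Z.div_mod (Z.of_nat n) 2); lia.
Qed.

(* When [2^j <= m], hits are encoded injectively into [[0, n m)]. *)
Lemma hit_count_near :
  (2 ^ j | Z.of_nat m)%Z ->
  Rsum_nat (n / 2) (fun s => Rsum_nat n (fun b =>
    if hit n B m f f' s b then 1 else 0)) <= INR (n * m).
Proof.
  intros HPM. unfold hit.
  set (code := fun s b => hit_code (Z.of_nat n) (Z.of_nat B) (Z.of_nat m) j kQ f f'
                            (Z.of_nat (2 * s + 1)) (Z.of_nat b)).
  assert (Hcode : forall s b, (s < n / 2)%nat ->
            (Z.abs (zrep (Z.of_nat n) (oZ (Z.of_nat n) (Z.of_nat B) f
               (Z.of_nat (2 * s + 1)) (Z.of_nat b) f')) < Z.of_nat m)%Z ->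
            (0 <= code s b < Z.of_nat n * Z.of_nat m)%Z).
  { intros s b Hs; apply hit_code_bound; auto. }
  apply count_by_injection with (Phi := fun s b => Z.to_nat (code s b)).
  - intros s b Hs _ Hhit; apply Z.ltb_lt, (Hcode s b Hs) in Hhit; lia.
  - intros s1 b1 s2 b2 Hs1 Hb1 Hs2 Hb2 H1 H2 E; apply Z.ltb_lt in H1, H2.
    pose proof (Hcode s1 b1 Hs1 H1); pose proof (Hcode s2 b2 Hs2 H2).
    destruct (hit_code_injective (Z.of_nat n) (Z.of_nat B) (Z.of_nat m) HN HBz HBM
                j kQ u f f' Hj HkQ HNjQ Hgap Hu HPM
                (Z.of_nat (2 * s1 + 1)) (Z.of_nat b1) (Z.of_nat (2 * s2 + 1)) (Z.of_nat b2));
      auto using odd_sigma; unfold code in *; lia.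
Qed.

Lemma hit_count_far :
  (2 * Z.of_nat m <= 2 ^ j)%Z ->
  Rsum_nat (n / 2) (fun s => Rsum_nat n (fun b =>
    if hit n B m f f' s b then 1 else 0)) <= INR (n * m).
Proof.
  intros Hfar. unfold hit.
  assert (Hnohit : forall s b, (Z.of_nat m <= Z.abs (zrep (Z.of_nat n)
            (oZ (Z.of_nat n) (Z.of_nat B) f (Z.of_nat (2 * s + 1)) (Z.of_nat b) f')))%Z).
  { intros s b; apply (no_hit_far (Z.of_nat n) (Z.of_nat B) (Z.of_nat m)
                         HN HBz HBM j kQ u f f'); auto using odd_sigma. }
  apply count_by_injection with (Phi := fun _ _ => 0%nat).
  - intros s b _ _ Hhit; apply Z.ltb_lt in Hhit; specialize (Hnohit s b); lia.
  - intros s1 b1 s2 b2 _ _ _ _ Hhit; apply Z.ltb_lt in Hhit.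
    specialize (Hnohit s1 b1); lia.
Qed.

End HitCount.

Lemma hit_count (n B m kn em : nat) (f f' : Z) :
  n = (2 ^ kn)%nat -> m = (2 ^ em)%nat -> n = (B * m)%nat -> (1 <= kn)%nat ->
  (0 <= f < Z.of_nat n)%Z -> (0 <= f' < Z.of_nat n)%Z -> f <> f' ->
  Rsum_nat (n / 2) (fun s => Rsum_nat n (fun b =>
    if hit n B m f f' s b then 1 else 0)) <= INR (n * m).
Proof.
  intros Hn Hm HnBm Hkn Hf Hf' Hff.
  assert (HN : Z.of_nat n = (2 ^ Z.of_nat kn)%Z) by (rewrite Hn, Nat2Z.inj_pow; auto).
  assert (HM : Z.of_nat m = (2 ^ Z.of_nat em)%Z) by (rewrite Hm, Nat2Z.inj_pow; auto).
  assert (HMpos : (0 < Z.of_nat m)%Z) by (rewrite HM; apply Z.pow_pos_nonneg; lia).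
  assert (HBz : (0 < Z.of_nat B)%Z) by nia.
  destruct (two_adic_decomposition (f' - f)) as [j [u [Hj [Hgap Hu]]]]; [lia|].
  assert (HjN : (j < Z.of_nat kn)%Z)
    by (apply (pow2_exponent_lt j _ u); auto; rewrite <- Hgap, <- HN; lia).
  assert (HNjQ : Z.of_nat n = (2 ^ j * 2 ^ (Z.of_nat kn - j))%Z)
    by (rewrite HN, <- Z.pow_add_r by lia; f_equal; lia).
  destruct (Z.le_gt_cases j (Z.of_nat em)) as [Hnear|Hfar].
  - apply (hit_count_near n B m j (Z.of_nat kn - j) u); auto; try lia.
    exists (2 ^ (Z.of_nat em - j))%Z; rewrite HM, <- Z.pow_add_r by lia; f_equal; lia.
  - apply (hit_count_far n B m j (Z.of_nat kn - j) u); auto; try lia.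
    rewrite HM, <- Z.pow_succ_r by lia; apply Z.pow_le_mono_r; lia.
Qed.

Lemma exp_le_mono (x y : R) : x <= y -> exp x <= exp y.
Proof. intros [H|E]; [left; apply exp_increasing; auto | rewrite E; lra]. Qed.

Lemma eps_bounds (F : nat) : 0 < eps F <= 1.
Proof.
  unfold eps; split; [apply pow_lt; lra|].
  rewrite <- (pow1 (F - 1)); apply pow_incr; lra.
Qed.

Lemma zrep_range (n : nat) (x : Z) :
  n = (2 * (n / 2))%nat -> (0 < n)%nat ->
  (- (Z.of_nat n / 2) <= zrep (Z.of_nat n) x < Z.of_nat n / 2)%Z.
Proof.
  intros Hn2 Hn.
  assert (Z.of_nat n = 2 * (Z.of_nat n / 2))%Z.
  { rewrite Hn2, Nat2Z.inj_mul at 1; rewrite Nat2Z.inj_div; lia. }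
  pose proof (Z.mod_pos_bound (x + Z.of_nat n / 2) (Z.of_nat n)).
  unfold zrep; lia.
Qed.

Lemma flat_filter_bounds (n B F m : nat) (G : Z -> R) (x : Z) :
  flat_filter n B F G -> n = (B * m)%nat -> (0 < B)%nat -> (0 < m)%nat ->
  n = (2 * (n / 2))%nat ->
  0 <= Gat (Z.of_nat n) G x <= 1 /\
  ((Z.of_nat m <= Z.abs (zrep (Z.of_nat n) x))%Z -> Gat (Z.of_nat n) G x <= eps F).
Proof.
  intros [_ Hflat] HnBm HB Hm Hn2. unfold Gat.
  set (z := zrep (Z.of_nat n) x).
  destruct (Hflat z (zrep_range n x Hn2 ltac:(nia))) as [HG01 [_ Htail]].
  split; auto; intros Hfar.
  assert (HmR : 0 < INR m) by (apply lt_0_INR; lia).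
  assert (HBR : 0 < INR B) by (apply lt_0_INR; lia).
  assert (Hz : INR m <= IZR (Z.abs z)) by (rewrite INR_IZR_INZ; apply IZR_le; lia).
  assert (Hratio : INR n / (INR B * IZR (Z.abs z)) = INR m / IZR (Z.abs z))
    by (rewrite HnBm, mult_INR; field; lra).
  assert (0 <= INR m / IZR (Z.abs z) <= 1).
  { split; [apply Rlt_le, Rdiv_lt_0_compat; lra|].
    apply Rmult_le_reg_r with (IZR (Z.abs z)); [lra|].
    unfold Rdiv; rewrite Rmult_assoc, Rinv_l; lra. }
  assert ((INR m / IZR (Z.abs z)) ^ (F - 1) <= 1)
    by (rewrite <- (pow1 (F - 1)); apply pow_incr; lra).
  pose proof (eps_bounds F).
  assert (Hn : INR n / INR B = INR m) by (rewrite HnBm, mult_INR; field; lra).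
  specialize (Htail ltac:(lra)); rewrite Hratio in Htail; nra.
Qed.

Lemma exp_flat_filter_le (n B F m : nat) (G : Z -> R) (lam : R) (x : Z) :
  flat_filter n B F G -> n = (B * m)%nat -> (0 < B)%nat -> (0 < m)%nat ->
  n = (2 * (n / 2))%nat -> 0 <= lam ->
  exp (lam * Gat (Z.of_nat n) G x) <=
  exp (lam * eps F) * (1 + (exp (lam * (1 - eps F)) - 1) *
     (if (Z.abs (zrep (Z.of_nat n) x) <? Z.of_nat m)%Z then 1 else 0)).
Proof.
  intros Hflat HnBm HB Hm Hn2 Hlam.
  destruct (flat_filter_bounds n B F m G x Hflat HnBm HB Hm Hn2) as [[_ HG1] Htail].
  pose proof (eps_bounds F).
  destruct (Z.ltb_spec (Z.abs (zrep (Z.of_nat n) x)) (Z.of_nat m)) as [Hnear|Hfar].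
  - replace (1 + _ * 1) with (exp (lam * (1 - eps F))) by ring.
    rewrite <- exp_plus; apply exp_le_mono; nra.
  - rewrite Rmult_0_r, Rplus_0_r, Rmult_1_r; apply exp_le_mono.
    apply Rmult_le_compat_l; auto.
Qed.

Lemma double_sum_affine_bound (S T : nat) (g ind : nat -> nat -> R) (E A : R) :
  (forall s b, g s b <= E * (1 + A * ind s b)) ->
  Rsum_nat S (fun s => Rsum_nat T (fun b => g s b)) <=
  E * (INR T * INR S + A * Rsum_nat S (fun s => Rsum_nat T (fun b => ind s b))).
Proof.
  intros Hg. rewrite !Rsum_nat_lsum.
  apply Rle_trans with
    (lsum (seq 0 S) (fun s => E * (INR T + A * lsum (seq 0 T) (fun b => ind s b)))).
  - apply lsum_le; intros s _.
    apply Rle_trans with (lsum (seq 0 T) (fun b => E * (1 + A * ind s b))).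
    + apply lsum_le; auto.
    + rewrite lsum_scal, lsum_const_plus, lsum_scal, length_seq, Rmult_1_l.
      apply Rle_refl.
  - rewrite lsum_scal, lsum_const_plus, lsum_scal, length_seq; apply Rle_refl.
Qed.

Lemma double_sum_factor (S T : nat) (h g : nat -> nat -> R) (c : R) :
  (forall s b, h s b = c * g s b) ->
  Rsum_nat S (fun s => Rsum_nat T (fun b => h s b)) =
  c * Rsum_nat S (fun s => Rsum_nat T (fun b => g s b)).
Proof.
  intros Hh. rewrite !Rsum_nat_lsum, <- lsum_scal; apply lsum_ext; intros s _.
  rewrite !Rsum_nat_lsum, <- lsum_scal; apply lsum_ext; intros b _; apply Hh.
Qed.

Lemma dyadic_params (n B kn ka : nat) :
  n = (2 ^ kn)%nat -> B = (2 ^ ka)%nat -> (2 <= B)%nat -> (B <= n)%nat ->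
  (1 <= kn)%nat /\ n = (B * (n / B))%nat /\ (n / B = 2 ^ (kn - ka))%nat.
Proof.
  intros Hn HB HB2 HBn.
  assert (Hka : (1 <= ka)%nat) by (destruct ka; simpl in HB; lia).
  assert (Hkak : (ka <= kn)%nat).
  { destruct (Nat.le_gt_cases ka kn) as [|Hlt]; auto.
    assert (2 ^ kn < 2 ^ ka)%nat by (apply Nat.pow_lt_mono_r; lia). lia. }
  assert (Hsplit : n = (B * 2 ^ (kn - ka))%nat)
    by (rewrite Hn, HB, <- Nat.pow_add_r; f_equal; lia).
  assert (Hq : (n / B = 2 ^ (kn - ka))%nat)
    by (rewrite Hsplit, Nat.mul_comm, Nat.div_mul; lia).
  repeat split; [lia | rewrite Hq; auto | auto].
Qed.

Lemma normalized_hit_bound (E A K Bv mv nv n2v : R) :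
  0 < E -> 0 <= A -> 0 < Bv -> 0 < mv -> nv = Bv * mv -> nv = 2 * n2v ->
  K <= nv * mv ->
  / (n2v * nv) * (E * (nv * n2v + A * K)) <= E * ((2 / Bv + 1 / nv) * A + 1).
Proof.
  intros HE HA HB Hm Hn Hn2 HK.
  assert (Hnpos : 0 < nv) by nra.
  assert (Hfrac : K / (n2v * nv) <= 2 / Bv).
  { apply Rle_trans with (nv * mv / (n2v * nv)).
    - apply Rmult_le_compat_r; [left; apply Rinv_0_lt_compat; nra | auto].
    - right; field_simplify_eq; nra. }
  assert (0 < 1 / nv) by (apply Rdiv_lt_0_compat; lra).
  replace (/ (n2v * nv) * (E * (nv * n2v + A * K)))
    with (E * (1 + A * (K / (n2v * nv)))) by (field; nra).
  apply Rmult_le_compat_l; nra.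
Qed.

Lemma average_exp_filter_le (n B F kn ka : nat) (G : Z -> R) (lam : R) (f f' : Z) :
  n = (2 ^ kn)%nat -> B = (2 ^ ka)%nat -> (2 <= B)%nat -> (B <= n)%nat ->
  flat_filter n B F G ->
  (0 <= f < Z.of_nat n)%Z -> (0 <= f' < Z.of_nat n)%Z -> f <> f' -> 0 <= lam ->
  / (INR (n / 2) * INR n) *
  Rsum_nat (n / 2) (fun s => Rsum_nat n (fun b =>
    exp (lam * Gat (Z.of_nat n) G
      (oZ (Z.of_nat n) (Z.of_nat B) f (Z.of_nat (2 * s + 1)) (Z.of_nat b) f'))))
  <= Mfun n B F lam.
Proof.
  intros Hn HB HB2 HBn Hflat Hf Hf' Hff Hlam.
  destruct (dyadic_params n B kn ka Hn HB HB2 HBn) as [Hkn [HnBm Hm]].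
  set (m := (n / B)%nat) in *; set (n2 := (n / 2)%nat).
  assert (Hn2 : n = (2 * n2)%nat).
  { unfold n2; rewrite Hn; replace kn with (S (kn - 1)) by lia.
    rewrite Nat.pow_succ_r', Nat.mul_comm, Nat.div_mul; lia. }
  assert (HB0 : (0 < B)%nat) by lia.
  assert (Hm0 : (0 < m)%nat) by (rewrite Hm; apply Nat.neq_0_lt_0, Nat.pow_nonzero; lia).
  set (E := exp (lam * eps F)); set (A := exp (lam * (1 - eps F)) - 1).
  pose proof (eps_bounds F).
  assert (HE : 0 < E) by apply exp_pos.
  assert (HA : 0 <= A).
  { pose proof (exp_ineq1_le (lam * (1 - eps F))); unfold A; nra. }
  set (Sexp := Rsum_nat n2 (fun s => Rsum_nat n (fun b =>
    exp (lam * Gat (Z.of_nat n) G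
      (oZ (Z.of_nat n) (Z.of_nat B) f (Z.of_nat (2 * s + 1)) (Z.of_nat b) f'))))).
  set (K := Rsum_nat n2 (fun s => Rsum_nat n (fun b =>
    if hit n B m f f' s b then 1 else 0))).
  assert (Hsum : Sexp <= E * (INR n * INR n2 + A * K)).
  { apply double_sum_affine_bound; intros s b.
    apply (exp_flat_filter_le n B F m G lam); auto. }
  assert (Hcount : K <= INR n * INR m).
  { rewrite <- mult_INR; apply (hit_count n B m kn (kn - ka)); auto. }
  apply Rle_trans with (/ (INR n2 * INR n) * (E * (INR n * INR n2 + A * K))).
  - apply Rmult_le_compat_l; auto.
    assert (0 < INR n2) by (apply lt_0_INR; lia).
    assert (0 < INR n) by (apply lt_0_INR; lia).
    left; apply Rinv_0_lt_compat, Rmult_lt_0_compat; auto.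
  - unfold Mfun; fold E A; apply normalized_hit_bound with (mv := INR m); auto.
    + apply lt_0_INR; lia.
    + apply lt_0_INR; lia.
    + rewrite HnBm at 1; apply mult_INR.
    + rewrite Hn2 at 1; rewrite mult_INR; auto.
Qed.

Lemma Mfun_nonneg (n B F : nat) (lam : R) :
  (0 < B)%nat -> (0 < n)%nat -> 0 <= lam -> 0 <= Mfun n B F lam.
Proof.
  intros HB Hn Hlam. pose proof (eps_bounds F).
  pose proof (exp_ineq1_le (lam * (1 - eps F))).
  assert (0 < INR B) by (apply lt_0_INR; auto).
  assert (0 < INR n) by (apply lt_0_INR; auto).
  assert (0 < 2 / INR B) by (apply Rdiv_lt_0_compat; lra).
  assert (0 < 1 / INR n) by (apply Rdiv_lt_0_compat; lra).
  assert (0 <= exp (lam * (1 - eps F)) - 1) by nra.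
  unfold Mfun; apply Rmult_le_pos; [left; apply exp_pos | nra].
Qed.

Lemma fold_right_Rplus_init (a : R) (l : list R) :
  fold_right Rplus a l = a + fold_right Rplus 0 l.
Proof. induction l as [|x l IH]; simpl; [|rewrite IH]; ring. Qed.

Lemma hr_extend (n B F d : nat) (G : Z -> R) (lam beta : R) (f f' : Z)
    (sb : list (Z * Z)) :
  0 <= Mfun n B F lam -> (length sb < d)%nat ->
  exists C, 0 <= C /\
    hr n B F d G lam beta f f' sb = C * Mfun n B F lam /\
    forall p, hr n B F d G lam beta f f' (sb ++ p :: nil) =
      C * exp (lam * Gat (Z.of_nat n) G
                 (oZ (Z.of_nat n) (Z.of_nat B) f (fst p) (snd p) f')).
Proof.
  intros HM Hlen.
  set (g := fun p : Z * Z => Gat (Z.of_nat n) G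
              (oZ (Z.of_nat n) (Z.of_nat B) f (fst p) (snd p) f')).
  exists (exp (- lam * beta) * exp (lam * fold_right Rplus 0 (map g sb)) *
          Mfun n B F lam ^ (d - S (length sb))).
  split; [|split].
  - apply Rmult_le_pos; [apply Rmult_le_pos; left; apply exp_pos | apply pow_le; auto].
  - unfold hr; fold g. replace (d - length sb)%nat with (S (d - S (length sb))) by lia.
    simpl; ring.
  - intros p; unfold hr; fold g.
    rewrite length_app, map_app, fold_right_app, Nat.add_1_r.
    rewrite fold_right_Rplus_init; cbn [map fold_right].
    rewrite Rplus_0_r, Rmult_plus_distr_l, exp_plus; unfold g; ring.
Qed.

Theorem lemma5p9 (n B F d : nat) (G : Z -> R) (lam beta : R)
  (f f' : Z) (sb : list (Z * Z)) :
  (exists k, n = (2 ^ k)%nat) -> (exists k, B = (2 ^ k)%nat) ->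
  (2 <= B)%nat -> (B <= n)%nat ->
  (2 <= F)%nat -> Nat.Even F ->
  flat_filter n B F G ->
  (1 <= d)%nat -> 0 < beta ->
  (0 <= f < Z.of_nat n)%Z -> (0 <= f' < Z.of_nat n)%Z -> f <> f' ->
  (length sb < d)%nat ->
  (forall p, In p sb ->
     (0 <= fst p < Z.of_nat n)%Z /\ (0 <= snd p < Z.of_nat n)%Z) ->
  0 <= lam ->
  hr n B F d G lam beta f f' sb >=
  / (INR (n / 2) * INR n) *
  Rsum_nat (n / 2) (fun s =>
    Rsum_nat n (fun b =>
      hr n B F d G lam beta f f'
         (sb ++ (Z.of_nat (2 * s + 1), Z.of_nat b) :: nil))).
Proof.
  intros [kn Hn] [ka HB] HB2 HBn _ _ Hflat _ _ Hf Hf' Hff Hlen _ Hlam.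
  assert (HM : 0 <= Mfun n B F lam) by (apply Mfun_nonneg; [lia | lia | auto]).
  destruct (hr_extend n B F d G lam beta f f' sb HM Hlen) as [C [HC [Hbefore Hafter]]].
  (* Both sides carry the factor [C]; what remains is the averaged bound. *)
  rewrite Hbefore, (double_sum_factor _ _ _ _ C
    (fun s b => Hafter (Z.of_nat (2 * s + 1), Z.of_nat b))).
  pose proof (average_exp_filter_le n B F kn ka G lam f f'
                Hn HB HB2 HBn Hflat Hf Hf' Hff Hlam).
  cbn [fst snd]. apply Rle_ge.
  rewrite <- Rmult_assoc, (Rmult_comm _ C), Rmult_assoc.
  apply Rmult_le_compat_l; auto.
Qed.
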